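(* Let $\mu=(\mu_i;i\in I)$ be a signature, i.e. a function $\mu:I\to\mathbb{N}^*$ from an arbitrary index set $I$ into the positive integers. The following statements are equivalent: (i) every ideal of $\Omega_\mu$ is representable; (ii) the set $\mu^{-1}[\mathbb{N}^*\setminus\{1\}]=\{i\in I:\mu_i\geq 2\}$ is finite; (iii) the set $\mathscr{J}(\Omega_\mu)$ of ideals of $\Omega_\mu$, equipped with the topology induced by the product topology on the power set $\mathfrak{P}(\Omega_\mu)\cong\{0,1\}^{\Omega_\mu}$, is compact.
   Context: A relational structure of signature $\mu$ is $\mathfrak A=(A;(R_i)_{i\in I})$ where each $R_i:A^{\mu_i}\to\{0,1\}$ is a $\mu_i$-ary relation on the set $A$. An embedding of $\mathfrak A$ into $\mathfrak B$ (same signature) is an injective map $f:A\to B$ such that $R^{\mathfrak A}_i(x_1,\dots,x_{\mu_i})=R^{\mathfrak B}_i(f(x_1),\dots,f(x_{\mu_i}))$ for all $i$ and all tuples; $\mathfrak A\le\mathfrak B$ means such an embedding exists. $\Omega_\mu$ is the set of isomorphism types of finite relational structures of signature $\mu$, partially ordered by $\le$. An ideal of $\Omega_\mu$ is a non-empty subset which is an initial segment (downward closed under $\le$) and up-directed. The age of a relational structure $\mathfrak A$ is the set of isomorphism types of its finite induced substructures. An ideal $\mathcal A$ of $\Omega_\mu$ is representable if there is a relational structure $\mathfrak A$ of signature $\mu$ with $\mathrm{age}(\mathfrak A)=\mathcal A$. *)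

From HB Require Import structures.
From mathcomp Require Import all_boot all_order all_algebra.
From mathcomp Require Import all_classical all_reals all_analysis.
Set Implicit Arguments. Unset Strict Implicit. Unset Printing Implicit Defensive.
Local Open Scope classical_set_scope.

(* A signature is mu : I -> nat (positivity is a hypothesis of the theorem). *)
Record relstruct (I : Type) (mu : I -> nat) := RelStruct {
  carrier : Type;
  rel : forall i : I, ('I_(mu i) -> carrier) -> bool }.

Definition embedding I (mu : I -> nat) (A B : relstruct mu)
  (f : carrier A -> carrier B) : Prop :=
  injective f /\
  forall (i : I) (x : 'I_(mu i) -> carrier A), @rel I mu A i x = @rel I mu B i (f \o x).
Arguments embedding {I mu} A B f.

Definition embeds I (mu : I -> nat) (A B : relstruct mu) : Prop :=
  exists f, embedding A B f.
Arguments embeds {I mu} A B.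

Definition isomorphic I (mu : I -> nat) (A B : relstruct mu) : Prop :=
  exists f, embedding A B f /\ (forall y, exists x, f x = y).
Arguments isomorphic {I mu} A B.

(* finite structures: every finite structure is isomorphic to one whose
   carrier is 'I_n for some n (n = 0 allowed: the empty structure) *)
Definition finstruct I (mu : I -> nat) :=
  {n : nat & forall i : I, ('I_(mu i) -> 'I_n) -> bool}.

Definition fs_struct I (mu : I -> nat) (F : finstruct mu) : relstruct mu :=
  @RelStruct I mu 'I_(projT1 F) (projT2 F).

Definition isotype I (mu : I -> nat) (F : finstruct mu) : finstruct mu -> Prop :=
  fun G => isomorphic (fs_struct G) (fs_struct F).

Definition Omega I (mu : I -> nat) :=
  {P : finstruct mu -> Prop | exists F, P = isotype F}.

Definition Ole I (mu : I -> nat) (a b : Omega mu) : Prop :=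
  exists F G : finstruct mu, proj1_sig a F /\ proj1_sig b G /\
    embeds (fs_struct F) (fs_struct G).

Definition is_ideal I (mu : I -> nat) (X : set (Omega mu)) : Prop :=
  [/\ X !=set0,
      (forall a b, Ole a b -> X b -> X a) &
      (forall a b, X a -> X b -> exists c, [/\ X c, Ole a c & Ole b c])].

Definition age I (mu : I -> nat) (A : relstruct mu) : set (Omega mu) :=
  [set a | exists F, proj1_sig a F /\ embeds (fs_struct F) A].

Definition representable I (mu : I -> nat) (X : set (Omega mu)) : Prop :=
  exists A : relstruct mu, age A = X.

(* J(Omega_mu) as a subset of P(Omega_mu) ~ {0,1}^Omega_mu with the product
   (pointwise) topology *)
Definition ideal_space I (mu : I -> nat) : set {ptws Omega mu -> bool} :=
  [set f | is_ideal (fun a => f a)].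
Arguments ideal_space {I} mu.

From Pilot Require Import Defs.
From HB Require Import structures.
From mathcomp Require Import all_boot all_order all_algebra.
From mathcomp Require Import all_classical all_reals all_analysis.
From mathcomp Require Import zify.
Set Implicit Arguments. Unset Strict Implicit. Unset Printing Implicit Defensive.
Local Open Scope classical_set_scope.

(* If only finitely many relations are non-unary, an ideal X of Omega_mu is
   the age of an ultraproduct of representatives of its members, taken along
   an ultrafilter containing the cones {c in X | b <= c}; similarly, a limit
   of ideals in {0,1}^Omega_mu is the age of an ultraproduct of structures
   representing them, so the ideals form a closed, hence compact, subspace.
   Only finite embeddings have to pass through the ultraproduct, and finitely
   many non-unary relations make this a finite conjunction; the unary
   relations, possibly infinitely many, are tamed by keeping only the germs
   whose unary type is eventually constant.

   If R_(q 0), R_(q 1), ... are infinitely many distinct non-unary relations,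
   the ages of the two-point structures in which R_(q 0) marks one point,
   R_(q 1) the other, and R_(q (k+2)) relates them, have no cluster point in
   the space of ideals. Moreover the finite structures in which every pair of
   distinct points carries exactly one "code" R_(q k), and no code is used
   twice from the same point, form an ideal; were it the age of some A, then
   A would contain points of all 2^aleph_0 unary types, and pairs made of a
   fixed point and these would need pairwise distinct codes, which Cantor's
   theorem forbids. *)

Local Coercion fs_struct : finstruct >-> relstruct.

(** * Embeddings, isomorphism types and ages *)

Section Embeddings.
Variables (I : Type) (mu : I -> nat).
Implicit Types (A B C : relstruct mu) (F G : finstruct mu) (a b c : Omega mu).

Lemma embedding_id A : embedding A A id.
Proof. by split=> // i x. Qed.

Lemma embedding_comp A B C f g :
  embedding A B f -> embedding B C g -> embedding A C (g \o f).
Proof.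
move=> [f_inj f_rel] [g_inj g_rel]; split; first exact: inj_comp.
by move=> i x; rewrite f_rel g_rel.
Qed.

Lemma embedding_factor A B C (e : carrier B -> carrier C) (f : carrier A -> carrier C) phi :
  embedding B C e -> embedding A C f -> e \o phi = f -> embedding A B phi.
Proof.
move=> [e_inj e_rel] + ef; rewrite -{}ef => -[f_inj f_rel].
split; first exact: inj_compr f_inj.
by move=> i x; rewrite f_rel e_rel.
Qed.

Lemma embeds_refl A : embeds A A.
Proof. by exists id; apply: embedding_id. Qed.

Lemma embeds_trans A B C : embeds A B -> embeds B C -> embeds A C.
Proof. by move=> [f hf] [g hg]; exists (g \o f); apply: embedding_comp hf hg. Qed.

Lemma isomorphic_refl A : isomorphic A A.
Proof. by exists id; split=> [|y]; [apply: embedding_id | exists y]. Qed.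

Lemma isomorphic_sym A B : isomorphic A B -> isomorphic B A.
Proof.
move=> [f [f_emb f_surj]]; have [g fgK] := choice f_surj.
exists g; split; last by move=> x; exists (f x); apply: f_emb.1; rewrite fgK.
apply: (embedding_factor f_emb (embedding_id B)).
by apply: funext => y /=; rewrite fgK.
Qed.

Lemma isomorphic_embeds A B : isomorphic A B -> embeds A B.
Proof. by move=> [f [hf _]]; exists f. Qed.

Lemma embeds_isoL A A' B : isomorphic A A' -> embeds A' B -> embeds A B.
Proof. by move/isomorphic_embeds; apply: embeds_trans. Qed.

Lemma embeds_isoR A B B' : isomorphic B B' -> embeds A B -> embeds A B'.
Proof. by move/isomorphic_embeds => BB' AB; apply: embeds_trans AB BB'. Qed.

Definition orep a : finstruct mu := projT1 (cid (proj2_sig a)).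

Lemma orepE a : proj1_sig a = isotype (orep a).
Proof. exact: projT2 (cid (proj2_sig a)). Qed.

Definition otype F : Omega mu := exist _ (isotype F) (ex_intro _ F erefl).

Lemma in_Omega a F : proj1_sig a F <-> isomorphic F (orep a).
Proof. by rewrite orepE. Qed.

Lemma orep_in a : proj1_sig a (orep a).
Proof. exact/in_Omega/isomorphic_refl. Qed.

Lemma orep_otype F : isomorphic (orep (otype F)) F.
Proof. exact/isomorphic_sym/in_Omega/isomorphic_refl. Qed.

Lemma OleE a b : Ole a b <-> embeds (orep a) (orep b).
Proof.
split=> [[F [G [/in_Omega Fa [/in_Omega Gb FG]]]]|ab].
  exact: embeds_isoL (isomorphic_sym Fa) (embeds_isoR Gb FG).
by exists (orep a), (orep b); split; [exact: orep_in | split=> //; exact: orep_in].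
Qed.

Lemma Ole_refl a : Ole a a.
Proof. exact/OleE/embeds_refl. Qed.

Lemma Ole_trans a b c : Ole a b -> Ole b c -> Ole a c.
Proof. by move=> /OleE ab /OleE bc; apply/OleE; apply: embeds_trans ab bc. Qed.

Lemma Ole_otypeL F b : Ole (otype F) b <-> embeds F (orep b).
Proof.
rewrite OleE; split; first exact: embeds_isoL (isomorphic_sym (orep_otype F)).
exact: embeds_isoL (orep_otype F).
Qed.

Lemma Ole_otypeR a F : Ole a (otype F) <-> embeds (orep a) F.
Proof.
rewrite OleE; split; first exact: embeds_isoR (orep_otype F).
exact: embeds_isoR (isomorphic_sym (orep_otype F)).
Qed.

Lemma ageE A a : age A a <-> embeds (orep a) A.
Proof.
split=> [[F [/in_Omega Fa FA]]|aA]; last by exists (orep a); split=> //; exact: orep_in.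
exact: embeds_isoL (isomorphic_sym Fa) FA.
Qed.

Lemma age_otype A F : age A (otype F) <-> embeds F A.
Proof.
rewrite ageE; split; first exact: embeds_isoL (isomorphic_sym (orep_otype F)).
exact: embeds_isoL (orep_otype F).
Qed.

Lemma age_Ole A a b : Ole a b -> age A b -> age A a.
Proof. by move=> /OleE ab /ageE bA; apply/ageE; apply: embeds_trans ab bA. Qed.

Lemma finite_image_substructure A k (h : 'I_k -> carrier A) :
  exists (C : finstruct mu) (e : carrier C -> carrier A) (phi : 'I_k -> carrier C),
    embedding C A e /\ e \o phi = h.
Proof.
pose r j := [arg min_(l < j | `[< h l = h j >]) (l : nat)].
have r_spec j : h (r j) = h j.
  by rewrite /r; case: arg_minnP => [|l /asboolP //]; exact/asboolP.
have r_eq j1 j2 : h j1 = h j2 -> r j1 = r j2.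
  move=> E; apply/val_inj/eqP; rewrite eqn_leq /r.
  case: arg_minnP => [|l1 /asboolP hl1 min1]; first exact/asboolP.
  case: arg_minnP => [|l2 /asboolP hl2 min2]; first exact/asboolP.
  by rewrite min1 ?min2 //; apply/asboolP; rewrite ?hl1 ?hl2 E.
pose D := (r @: [set: 'I_k])%SET.
have rD j : r j \in D by apply/imsetP; exists j.
pose m := #|D|; pose e (u : 'I_m) := h (enum_val u).
exists (existT _ m (fun i (x : 'I_(mu i) -> 'I_m) => Defs.rel (e \o x))), e.
exists (fun j => enum_rank_in (rD j) (r j)); split.
  split=> //= u v; rewrite /e => huv; apply: enum_val_inj.
  move: (enum_valP u) (enum_valP v) huv => /imsetP[j1 _ ->] /imsetP[j2 _ ->].
  by rewrite !r_spec => /r_eq.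
by apply: funext => j /=; rewrite /e enum_rankK_in // r_spec.
Qed.

End Embeddings.

Section Ages.
Variables (I : Type) (mu : I -> nat) (mu_pos : forall i, (0 < mu i)%N).
Implicit Types (A : relstruct mu) (a b : Omega mu).

Definition empty_struct : finstruct mu := existT _ 0%N (fun i _ => false).

Lemma empty_struct_embeds A : embeds empty_struct A.
Proof.
exists (fun j : 'I_0 => match j with Ordinal _ j0 => False_rect _ (notF j0) end).
by split=> [[]|i x] //; case: (x (Ordinal (mu_pos i))).
Qed.

Lemma tuple_unary (X : Type) i (x : 'I_(mu i) -> X) :
  (mu i < 2)%N -> x = fun=> x (Ordinal (mu_pos i)).
Proof.
move=> unary; apply: funext => l; congr x; apply/val_inj => /=.
by have := ltn_ord l; lia.
Qed.

Lemma age_ideal A : is_ideal (age A).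
Proof.
split.
- by exists (otype empty_struct); apply/age_otype; exact: empty_struct_embeds.
- by move=> a b; apply: age_Ole.
move=> a b /ageE [ea ha] /ageE [eb hb].
pose na := projT1 (orep a); pose nb := projT1 (orep b).
pose h (j : 'I_(na + nb)) := match fintype.split j with inl l => ea l | inr r => eb r end.
have [C [e [phi [he ephi]]]] := finite_image_substructure h.
exists (otype C); split; first by apply/age_otype; exists e.
- apply/Ole_otypeR; exists (phi \o lshift nb); apply: embedding_factor he ha _.
  by apply: funext => l; rewrite /= -[e _]/((e \o phi) _) ephi /h (unsplitK (inl _ _)).
- apply/Ole_otypeR; exists (phi \o @rshift na nb); apply: embedding_factor he hb _.
  by apply: funext => r; rewrite /= -[e _]/((e \o phi) _) ephi /h (unsplitK (inr _ _)).
Qed.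

End Ages.

(** * Ultraproducts *)

Section Filters.
Variables (T : Type) (F : set_system T).

Lemma filter_forall_finite_set (J : Type) (D : set J) (P : J -> set T) :
  Filter F -> finite_set D -> (forall j, D j -> F (P j)) ->
  F [set t | forall j, D j -> P j t].
Proof.
move=> FF finD FP; have [X DX] := (@finite_fsetP {classic J} D).1 finD.
rewrite DX in FP *; apply: filterS (@filter_bigI T {classic J} X P F FF FP) => t Pt j Xj.
exact: Pt.
Qed.

Hypothesis F_ultra : UltraFilter F.

Lemma ultra_meet W1 W2 : F W1 -> F W2 -> exists t, W1 t /\ W2 t.
Proof. by move=> F1 F2; have [t [? ?]] := filter_ex (filterI F1 F2); exists t. Qed.

Lemma ultra_asbool (W : set T) (f : T -> bool) b :
  F W -> (forall t, W t -> f t = b) -> `[< F [set t | f t] >] = b.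
Proof.
move=> FW Wf; case: b Wf => Wf.
  by apply/asboolP; apply: filterS FW => t /Wf /= ->.
by apply/asboolP => Ff; have [t [/Wf /= -> //]] := ultra_meet FW Ff.
Qed.

Lemma ultra_asboolE (f : T -> bool) : F [set t | f t = `[< F [set t | f t] >]].
Proof.
have [Ff|Fnf] := in_ultra_setVsetC [set t | f t] F_ultra.
  by rewrite (asboolT Ff); apply: filterS Ff => t /= ->.
rewrite (ultra_asbool Fnf (b := false)); last by move=> t /negP /negbTE.
by apply: filterS Fnf => t /negP /negbTE.
Qed.

End Filters.

Section Ultraproduct.
Variables (I : Type) (mu : I -> nat) (mu_pos : forall i, (0 < mu i)%N).
Hypothesis finite_nonunary : finite_set [set i | (2 <= mu i)%N].
Variables (T : Type) (U : set_system T) (U_ultra : UltraFilter U).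
Variable A : T -> relstruct mu.

Definition germ := forall t, option (carrier (A t)).

Definition rel_opt t i (v : 'I_(mu i) -> option (carrier (A t))) : bool :=
  `[< exists w, v = Some \o w /\ Defs.rel w >].

Lemma rel_opt_Some t i (w : 'I_(mu i) -> carrier (A t)) : rel_opt (Some \o w) = Defs.rel w.
Proof.
apply/asboolP/idP => [[w' [ww' ?]]|]; last by exists w.
suff -> : w = w' by [].
by apply: funext => j; have [] := congr1 (fun f => f j) ww'.
Qed.

(* Only germs whose unary type is constant on a large set are kept: there may
   be infinitely many unary relations, and Los' theorem for the infinite
   conjunction describing a one-point substructure would fail otherwise. *)
Definition stable_on (g : germ) (W : set T) := forall t, W t ->
  g t <> None /\ forall i, (mu i < 2)%N -> forall t', W t' ->
    rel_opt (fun _ : 'I_(mu i) => g t) = rel_opt (fun _ : 'I_(mu i) => g t').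

Definition stable (g : germ) := exists2 W, U W & stable_on g W.

Definition germ_eq (g h : germ) := U [set t | g t = h t /\ g t <> None].

Lemma germ_eq_refl g : stable g -> germ_eq g g.
Proof. by move=> [W UW gW]; apply: filterS UW => t /gW[]. Qed.

Lemma germ_eq_sym g h : germ_eq g h -> germ_eq h g.
Proof. by apply: filterS => t [gh g_def] /=; rewrite -gh. Qed.

Lemma germ_eq_trans g h k : germ_eq g h -> germ_eq h k -> germ_eq g k.
Proof.
by move=> gh hk; apply: filterS (filterI gh hk) => t [[/= -> _] [-> hdef]].
Qed.

Definition germ_canon (g : germ) : germ :=
  @xget {classic germ} (fun=> None) [set h | stable h /\ germ_eq h g].

Lemma germ_canonP g : stable g -> stable (germ_canon g) /\ germ_eq (germ_canon g) g.
Proof.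
move=> sg; have := @xgetPex {classic germ} (fun=> None) [set h | stable h /\ germ_eq h g].
by apply; exists g; split=> //; exact: germ_eq_refl.
Qed.

Lemma germ_canon_eq g h : germ_eq g h -> germ_canon g = germ_canon h.
Proof.
move=> gh; rewrite /germ_canon; f_equal; apply/seteqP; split=> k [sk kg]; split=> //.
  exact: germ_eq_trans kg gh.
exact: germ_eq_trans kg (germ_eq_sym gh).
Qed.

(* The quotient of stable germs by germ_eq, each class represented by its
   canonical germ. *)
Definition ultra_elt := {g : germ | stable g /\ germ_canon g = g}.

Definition ultra_of g (sg : stable g) : ultra_elt :=
  exist _ (germ_canon g) (conj (germ_canonP sg).1 (germ_canon_eq (germ_canonP sg).2)).

Lemma ultra_eltP (x y : ultra_elt) : germ_eq (sval x) (sval y) -> x = y.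
Proof.
case: x => g [sg cg]; case: y => h [sh ch] /= /germ_canon_eq gh.
have E : g = h by rewrite -cg -ch.
by subst h; congr exist; apply: Prop_irrelevance.
Qed.

Lemma ultra_elt_neq (x y : ultra_elt) : x <> y ->
  U [set t | ~ (sval x t = sval y t /\ sval x t <> None)].
Proof.
move=> xy; pose E := [set t | sval x t = sval y t /\ sval x t <> None].
by case: (in_ultra_setVsetC E U_ultra) => // /ultra_eltP.
Qed.

Definition ultra_rel i (x : 'I_(mu i) -> ultra_elt) : bool :=
  `[< U [set t | rel_opt (fun j => sval (x j) t)] >].

Definition ultraproduct : relstruct mu := RelStruct ultra_rel.

Lemma ultra_rel_unary i (x : ultra_elt) W t : (mu i < 2)%N ->
  U W -> stable_on (sval x) W -> W t ->
  ultra_rel (fun _ : 'I_(mu i) => x) = rel_opt (fun _ : 'I_(mu i) => sval x t).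
Proof.
move=> unary UW xW Wt; apply: (ultra_asbool U_ultra UW) => t' Wt'.
by have [_ xW'] := xW t' Wt'; rewrite (xW' i unary t Wt).
Qed.

Lemma embeds_from_ultraproduct (F : finstruct mu) :
  embeds F ultraproduct -> U [set t | embeds F (A t)].
Proof.
case: F => n RF [e [e_inj e_rel]] /=.
pose g j := sval (e j).
have /choice[W WP] j : exists W, U W /\ stable_on (g j) W.
  by have [[W ? ?] _] := proj2_sig (e j); exists W.
have near_def : U [set t | forall j, W j t] by apply: filter_forall => j; exact: (WP j).1.
have near_inj : U [set t | forall j k, j != k -> ~ (g j t = g k t /\ g j t <> None)].
  apply: filter_forall => j; apply: filter_forall => k.
  have [->|jk] := eqVneq j k; first by apply: filterE.
  have ejk : e j <> e k by move/e_inj/eqP; apply/negP.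
  by apply: filterS (ultra_elt_neq ejk) => t + _.
have near_rel : U [set t | forall i, (2 <= mu i)%N ->
    forall x : {ffun 'I_(mu i) -> 'I_n}, rel_opt (fun l => g (x l) t) = RF i x].
  apply: filter_forall_finite_set => // i _; apply: filter_forall => x.
  by have /= -> := e_rel i x; exact: ultra_asboolE.
apply: filterS (filterI near_def (filterI near_inj near_rel)) => t [Wt [inj_t rel_t]].
have /choice[h gh] j : exists y, g j t = Some y.
  have [+ _] := (WP j).2 t (Wt j).
  by case: (g j t) => [y _|//]; exists y.
have g_tuple i (x : 'I_(mu i) -> 'I_n) : (fun l => g (x l) t) = Some \o (h \o x).
  by apply: funext => l; rewrite /= gh.
exists h; split=> [j k hjk|i x /=].
  by apply/eqP/negPn/negP => jk; apply: (inj_t j k jk); rewrite !gh hjk.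
have [nonunary|unary] := leqP 2 (mu i).
  have ffx : fun_of_fin (finfun x) = x by apply/funext => l; rewrite ffunE.
  by have := rel_t i nonunary (finfun x); rewrite ffx g_tuple rel_opt_Some.
rewrite (tuple_unary mu_pos x unary); set k := x _.
have /= -> := e_rel i (fun=> k); have [UW kW] := WP k.
by rewrite (ultra_rel_unary unary UW kW (Wt k)) -/(g k) (g_tuple i (fun=> k)) rel_opt_Some.
Qed.

Lemma embeds_into_ultraproduct (F : finstruct mu) :
  U [set t | embeds F (A t)] -> embeds F ultraproduct.
Proof.
move=> near_emb.
pose E t : option (carrier F -> carrier (A t)) :=
  if pselect (embeds F (A t)) is left P then Some (proj1_sig (cid P)) else None.
have E_emb t : embeds F (A t) -> exists2 f, E t = Some f & embedding F (A t) f.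
  rewrite /E; case: pselect => // P _.
  by exists (proj1_sig (cid P)) => //; exact: proj2_sig (cid P).
pose g j : germ := fun t => omap (fun f => f j) (E t).
have sg j : stable (g j).
  exists [set t | embeds F (A t)] => // t /E_emb[f Ef [_ f_rel]].
  rewrite /g Ef; split=> // i _ t' /E_emb[f' Ef' [_ f'_rel]] /=; rewrite Ef' /=.
  by rewrite !(rel_opt_Some (fun=> _)) -(f_rel i (fun=> j)) -(f'_rel i (fun=> j)).
exists (fun j => ultra_of (sg j)); split=> [j k /(congr1 sval) /= cjk|i x /=].
  have gjk : germ_eq (g j) (g k).
    apply: germ_eq_trans (germ_eq_sym (germ_canonP (sg j)).2) _.
    by rewrite cjk; exact: (germ_canonP (sg k)).2.
  have [t [[/= + _] /E_emb[f Ef [f_inj _]]]] := ultra_meet U_ultra gjk near_emb.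
  by rewrite /g Ef => -[/f_inj].
have near_canon : U [set t | forall j, germ_canon (g j) t = g j t].
  apply: (@filter_forall _ _ _ U) => j.
  by apply: filterS (germ_canonP (sg j)).2 => t [].
rewrite /ultra_rel /=; apply/esym/(ultra_asbool U_ultra (filterI near_emb near_canon)).
move=> t [/E_emb[f Ef [_ f_rel]] canon_t].
have -> : (fun j => germ_canon (g (x j)) t) = Some \o (f \o x).
  by apply: funext => l; rewrite /= canon_t /g Ef.
by rewrite rel_opt_Some; exact: (esym (f_rel i x)).
Qed.

Lemma age_ultraproduct a : age ultraproduct a <-> U [set t | age (A t) a].
Proof.
rewrite ageE; split=> [/embeds_from_ultraproduct|near_a].
  by apply: filterS => t /ageE.
by apply: embeds_into_ultraproduct; apply: filterS near_a => t /ageE.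
Qed.

End Ultraproduct.

(** * Finitely many non-unary relations *)

Lemma ptws_bool_compact (V : Type) : compact [set: {ptws V -> bool}].
Proof.
have := @tychonoff {classic V} (fun=> bool) (fun=> setT) (fun=> bool_compact).
by rewrite (_ : [set f | _] = setT) //; apply/seteqP; split.
Qed.

Lemma ptws_nbhs_eval (V : Type) (p : {ptws V -> bool}) c :
  nbhs p [set f : {ptws V -> bool} | f c = p c].
Proof. by apply: (@proj_continuous {classic V} (fun=> bool) c p [set b | b = p c]). Qed.

Section FiniteNonunary.
Variables (I : Type) (mu : I -> nat) (mu_pos : forall i, (0 < mu i)%N).
Hypothesis finite_nonunary : finite_set [set i | (2 <= mu i)%N].

Lemma ideal_representable (X : set (Omega mu)) : is_ideal X -> representable X.
Proof.
move=> [[a0 Xa0] X_down X_dir].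
pose above b := [set c | X c /\ Ole b c].
have above_filter : ProperFilter (filter_from X above).
  apply: filter_from_proper; last by move=> b Xb; exists b; split=> //; exact: Ole_refl.
  apply: filter_from_filter; first by exists a0.
  move=> b1 b2 Xb1 Xb2; have [c [Xc b1c b2c]] := X_dir _ _ Xb1 Xb2.
  by exists c => // d [Xd cd]; split; split=> //; exact: Ole_trans cd.
have [U [U_ultra sU]] := ultraFilterLemma above_filter.
have U_above b : X b -> U (above b) by move=> Xb; apply: sU; exists b.
exists (ultraproduct U (fun c => fs_struct (orep c))); apply/funext => a; apply/propext.
rewrite (age_ultraproduct mu_pos finite_nonunary U_ultra); split=> [near_a|Xa].
  have [c [/ageE ac [Xc _]]] := ultra_meet U_ultra near_a (U_above _ Xa0).
  by apply: X_down Xc; apply/OleE.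
by apply: filterS (U_above _ Xa) => c [_ /OleE ac]; apply/ageE.
Qed.

Lemma ideal_space_closed : closed (ideal_space mu).
Proof.
move=> p; rewrite closureEcvg => -[G G_proper [G_p G_ideals]].
have [U [U_ultra sU]] := ultraFilterLemma G_proper.
have U_ideals : U (ideal_space mu) by exact/sU/G_ideals.
have U_p c : U [set f : {ptws Omega mu -> bool} | f c = p c].
  exact/sU/G_p/ptws_nbhs_eval.
pose A (f : {ptws Omega mu -> bool}) : relstruct mu :=
  if pselect (is_ideal (fun a => f a)) is left P
  then proj1_sig (cid (ideal_representable P)) else fs_struct (empty_struct mu).
have ageA f : ideal_space mu f -> age (A f) = (fun a => f a).
  by rewrite /A; case: pselect => // P _; exact: proj2_sig (cid (ideal_representable P)).
rewrite /ideal_space /=.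
suff -> : (fun a => is_true (p a)) = age (ultraproduct U A) by exact: age_ideal.
apply/funext => a; apply/propext.
rewrite (age_ultraproduct mu_pos finite_nonunary U_ultra); split=> [pa|near_a].
  by apply: filterS (filterI (U_p a) U_ideals) => f [/= fa /ageA ->]; rewrite fa.
have [f [[fa /ageA Af] /= <-]] := ultra_meet U_ultra (filterI near_a U_ideals) (U_p a).
by move: fa; rewrite /= Af.
Qed.

Lemma ideal_space_compact : compact (ideal_space mu).
Proof. exact: subclosed_compact ideal_space_closed (@ptws_bool_compact _) (subsetT _). Qed.

End FiniteNonunary.

(** * Infinitely many non-unary relations *)

Lemma nat_bool_not_inj (K : (nat -> bool) -> nat) : ~ injective K.
Proof.
move=> K_inj; pose D n := ~~ `[< exists2 S, K S = n & S n >].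
have : D (K D) = ~~ D (K D).
  by congr negb; apply/asboolP/idP => [[S /K_inj -> //]|DKD]; exists D.
by case: (D (K D)).
Qed.

Lemma infinite_set_injection (J : Type) (N : set J) :
  infinite_set N -> exists2 q : nat -> J, injective q & forall n, N (q n).
Proof.
rewrite finite_setPn => /contrapT /card_leP /injfunPex [f _ f_inj].
have natT n : n \in [set: nat] by rewrite in_setT.
exists (fun n => val (f (exist _ n (natT n)))) => [m n /val_inj E|n].
  by have [] := f_inj _ _ (in_setT _) (in_setT _) E.
exact: set_mem (valP (f (exist _ n (natT n)))).
Qed.

Section InfiniteNonunary.
Variables (I : Type) (mu : I -> nat) (mu_pos : forall i, (0 < mu i)%N).
Variables (q : nat -> I) (q_inj : injective q).
Hypothesis q_nonunary : forall n, (2 <= mu (q n))%N.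
Implicit Types (A B : relstruct mu) (F : finstruct mu).

Definition fst_idx i : 'I_(mu i) := Ordinal (mu_pos i).
Definition snd_idx n : 'I_(mu (q n)) := Ordinal (q_nonunary n).

Definition tuple2 (C : Type) i (u v : C) : 'I_(mu i) -> C :=
  fun j => if val j == 0%N then u else v.
Arguments tuple2 {C} i u v.

Lemma tuple2_fst (C : Type) i (u v : C) : tuple2 i u v (fst_idx i) = u.
Proof. by []. Qed.

Lemma tuple2_snd (C : Type) n (u v : C) : tuple2 (q n) u v (snd_idx n) = v.
Proof. by []. Qed.

Lemma tuple2_comp (C D : Type) (f : C -> D) i u v :
  f \o tuple2 i u v = tuple2 i (f u) (f v).
Proof. by apply: funext => j; rewrite /tuple2 /=; case: ifP. Qed.

Lemma tuple2_inj (C : Type) n (u v u' v' : C) :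
  tuple2 (q n) u v = tuple2 (q n) u' v' -> u = u' /\ v = v'.
Proof.
move=> E; split.
  by have := congr1 (@^~ (fst_idx (q n))) E; rewrite !tuple2_fst.
by have := congr1 (@^~ (snd_idx n)) E; rewrite !tuple2_snd.
Qed.

Lemma tuple2_const (C : Type) n (u v w : C) :
  tuple2 (q n) u v = (fun=> w) -> u = w /\ v = w.
Proof.
move=> E; apply: (@tuple2_inj _ n u v w w).
by rewrite E; apply: funext => j; rewrite /tuple2; case: ifP.
Qed.

Lemma const_tuple_inj (C : Type) i (u w : C) : (fun _ : 'I_(mu i) => u) = (fun=> w) -> u = w.
Proof. exact: (congr1 (@^~ (fst_idx i))). Qed.

Definition qrel A k (u v : carrier A) := Defs.rel (tuple2 (q k) u v).
Arguments qrel : clear implicits.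

Lemma qrel_embedding A B f k u v :
  embedding A B f -> qrel A k u v = qrel B k (f u) (f v).
Proof. by move=> [_ f_rel]; rewrite /qrel f_rel tuple2_comp. Qed.
Arguments qrel_embedding {A B f k u v}.

Definition point m : finstruct mu := existT _ 1%N (fun i _ => `[< i = q m >]).

Definition two_point k : finstruct mu := existT _ 2%N (fun i (x : 'I_(mu i) -> 'I_2) =>
  `[< [\/ i = q 0 /\ x = (fun=> ord0), i = q 1 /\ x = (fun=> ord_max)
       | i = q k.+2 /\ x = tuple2 i ord0 ord_max] >]).

Lemma two_point_const k i (u : 'I_2) :
  @Defs.rel _ _ (two_point k) i (fun=> u) <->
  (i = q 0 /\ u = ord0) \/ (i = q 1 /\ u = ord_max).
Proof.
split=> [/asboolP|]; last first.
  by move=> [[-> ->]|[-> ->]]; apply/asboolP; [apply: Or31 | apply: Or32].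
case=> [[Ei E]|[Ei E]|[Ei]]; [left|right|]; try by split=> //; apply: const_tuple_inj E.
subst i => E; have [E0 E1] := tuple2_const (esym E).
by have := congr1 val (etrans E0 (esym E1)).
Qed.

Lemma two_point_qrel k n : qrel (two_point k) n ord0 ord_max <-> n = k.+2.
Proof.
split=> [/asboolP|->]; last exact/asboolP/Or33.
case=> [[_ E]|[_ E]|[/q_inj //]]; have [E0 E1] := tuple2_const E.
  by have := congr1 val E1.
by have := congr1 val E0.
Qed.

Lemma point_embeds_two_point0 k : embeds (point 0) (two_point k).
Proof.
exists (fun=> ord0); split=> [u v _|i x]; first by rewrite (ord1 u) (ord1 v).
change (`[< i = q 0 >] = @Defs.rel _ _ (two_point k) i (fun=> ord0)).
apply/asboolP/idP => [Ei|/(two_point_const k i ord0)[[]//|[_ E]]].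
  by apply/(two_point_const k i ord0); left.
by have := congr1 val E.
Qed.

Lemma point_embeds_two_point1 k : embeds (point 1) (two_point k).
Proof.
exists (fun=> ord_max); split=> [u v _|i x]; first by rewrite (ord1 u) (ord1 v).
change (`[< i = q 1 >] = @Defs.rel _ _ (two_point k) i (fun=> ord_max)).
apply/asboolP/idP => [Ei|/(two_point_const k i ord_max)[[_ E]|[]//]].
  by apply/(two_point_const k i ord_max); right.
by have := congr1 val E.
Qed.

Lemma point_embedding_rel A m f :
  embedding (point m) A f -> Defs.rel (fun _ : 'I_(mu (q m)) => f ord0).
Proof. by move=> [_ f_rel]; rewrite -[fun=> _]/(f \o fun=> ord0) -f_rel; apply/asboolP. Qed.

Lemma two_point_embedding_qrel A k e u v n : embedding A (two_point k) e ->
  Defs.rel (fun _ : 'I_(mu (q 0)) => u) -> Defs.rel (fun _ : 'I_(mu (q 1)) => v) ->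
  qrel A n u v <-> n = k.+2.
Proof.
move=> e_emb; have [_ e_rel] := e_emb.
rewrite e_rel => /(two_point_const k (q 0) (e u))[[_ eu]|[/q_inj //]].
rewrite e_rel => /(two_point_const k (q 1) (e v))[[/q_inj //]|[_ ev]].
by rewrite (qrel_embedding e_emb) eu ev two_point_qrel.
Qed.

Lemma two_point_age_inj k k' c :
  Ole (otype (point 0)) c -> Ole (otype (point 1)) c ->
  age (two_point k) c -> age (two_point k') c -> k = k'.
Proof.
move=> /Ole_otypeL[f0 /point_embedding_rel u0] /Ole_otypeL[f1 /point_embedding_rel u1].
move=> /ageE[e e_emb] /ageE[e' e'_emb].
have /(two_point_embedding_qrel _ e'_emb u0 u1) [] // : qrel (orep c) k.+2 (f0 ord0) (f1 ord0).
exact/(two_point_embedding_qrel _ e_emb u0 u1).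
Qed.

Lemma ideal_space_not_compact : ~ compact (ideal_space mu).
Proof.
move=> cpt.
pose f k : {ptws Omega mu -> bool} := fun a => `[< age (two_point k) a >].
have f_ideal k : ideal_space mu (f k).
  rewrite /ideal_space /= (_ : (fun a => _) = age (two_point k)); first exact: age_ideal.
  by apply/funext => a; rewrite /f asboolE.
have f_ideals : (f @ \oo) (ideal_space mu) by exists 0%N => // k _; exact: f_ideal.
have [p [p_ideal p_cluster]] := cpt _ _ f_ideals.
have hit m c : exists2 k, (m <= k)%N & f k c = p c.
  have tail : (f @ \oo) [set f k | k in [set k | (m <= k)%N]] by exists m => // n mn; exists n.
  by have [_ [[k mk <-] fkc]] := p_cluster _ _ tail (ptws_nbhs_eval p c); exists k.
have p_point0 : p (otype (point 0)).
  have [k _ <-] := hit 0%N (otype (point 0)).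
  exact/asboolP/age_otype/point_embeds_two_point0.
have p_point1 : p (otype (point 1)).
  have [k _ <-] := hit 0%N (otype (point 1)).
  exact/asboolP/age_otype/point_embeds_two_point1.
have [_ _ p_dir] := p_ideal; have [c [pc c0 c1]] := p_dir _ _ p_point0 p_point1.
have [k0 _ fk0] := hit 0%N c; have [k1 k0k1 fk1] := hit k0.+1 c.
suff k01 : k0 = k1 by rewrite k01 ltnn in k0k1.
apply: two_point_age_inj c0 c1 _ _; apply/asboolP.
  by rewrite -/(f k0 c) fk0.
by rewrite -/(f k1 c) fk1.
Qed.

Definition coded A :=
  (forall u v : carrier A, u <> v -> exists! k, qrel A k u v) /\
  (forall (u v w : carrier A) k, u <> v -> u <> w ->
     qrel A k u v -> qrel A k u w -> v = w).

Lemma coded_embedding A B f : embedding A B f -> coded B -> coded A.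
Proof.
move=> f_emb [B_code B_fresh]; have [f_inj _] := f_emb.
split=> [u v uv|u v w k uv uw].
  have [k [kuv k_uniq]] := B_code _ _ (fun E => uv (f_inj _ _ E)).
  by exists k; split=> [|k']; rewrite (qrel_embedding f_emb) //; apply: k_uniq.
rewrite !(qrel_embedding f_emb) => kuv kuw; apply: (f_inj).
by apply: B_fresh kuv kuw => /f_inj.
Qed.

Definition coded_age : set (Omega mu) := [set a | coded (orep a)].

Lemma coded_otype F : coded_age (otype F) <-> coded F.
Proof.
have [f [f_emb _]] := orep_otype F; have [g [g_emb _]] := isomorphic_sym (orep_otype F).
by split; [apply: coded_embedding g_emb | apply: coded_embedding f_emb].
Qed.

Lemma coded_code_bound F : coded F ->
  exists M, forall k (u v : carrier F), u <> v -> qrel F k u v -> (k < M)%N.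
Proof.
move=> [F_code _]; pose n := projT1 F.
have /choice[K K_spec] (uv : 'I_n * 'I_n) :
    exists k, uv.1 <> uv.2 -> forall k', qrel F k' uv.1 uv.2 -> k' = k.
  case: uv => u v /=; have [->|uv] := pselect (u = v); first by exists 0%N.
  by have [k [_ k_uniq]] := F_code _ _ uv; exists k => _ k' /k_uniq.
exists (\max_(uv : 'I_n * 'I_n) K uv).+1 => k u v uv kuv.
by rewrite ltnS (K_spec (u, v) uv k kuv); exact: (leq_bigmax (u, v)).
Qed.

Lemma ord_addP m n (u : 'I_(m + n)) :
  (exists l, u = lshift n l) \/ (exists r, u = rshift m r).
Proof.
by rewrite -(splitK u); case: (fintype.split u) => [l|r]; [left; exists l|right; exists r].
Qed.

Lemma lrshift_neq m n (l : 'I_m) (r : 'I_n) : lshift n l <> rshift m r.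
Proof. by move/eqP; rewrite eq_lrshift. Qed.

Section Amalgam.
Variables (F G : finstruct mu) (M : nat).
Hypotheses (F_coded : coded F) (G_coded : coded G).
Hypothesis F_bound : forall k (u v : carrier F), u <> v -> qrel F k u v -> (k < M)%N.
Hypothesis G_bound : forall k (u v : carrier G), u <> v -> qrel G k u v -> (k < M)%N.

Local Notation nF := (projT1 F).
Local Notation nG := (projT1 G).
Local Notation L := (@lshift nF nG).
Local Notation R := (@rshift nF nG).

(* Cross pairs get fresh codes, above every code used inside F or G. *)
Definition cross_code (lr : 'I_nF * 'I_nG) := (M + enum_rank lr)%N.

Lemma cross_code_inj : injective cross_code.
Proof. by move=> lr lr' /addnI /val_inj /enum_rank_inj. Qed.

Definition amalgam : finstruct mu := existT _ (nF + nG)%N (fun i x =>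
  `[< [\/ exists y, x = L \o y /\ Defs.rel (r := F) y,
          exists y, x = R \o y /\ Defs.rel (r := G) y
        | exists lr, i = q (cross_code lr) /\
            (x = tuple2 i (L lr.1) (R lr.2) \/ x = tuple2 i (R lr.2) (L lr.1))] >]).

Lemma amalgam_embeddingL : embedding F amalgam L.
Proof.
split=> [|i y]; first exact: lshift_inj.
apply/idP/asboolP => [Fy|[[y' [E Fy']]|[y' [E _]]|[[l r] [Ei [E|E]]]]].
- by apply: Or31; exists y.
- by rewrite (_ : y = y') //; apply/funext => j; apply: lshift_inj; exact: (congr1 (@^~ j) E).
- by have /lrshift_neq := congr1 (@^~ (fst_idx i)) E.
- by subst i; have /lrshift_neq := congr1 (@^~ (snd_idx _)) E.
- by have /lrshift_neq := congr1 (@^~ (fst_idx i)) E.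
Qed.

Lemma amalgam_embeddingR : embedding G amalgam R.
Proof.
split=> [|i y]; first exact: rshift_inj.
apply/idP/asboolP => [Gy|[[y' [E _]]|[y' [E Gy']]|[[l r] [Ei [E|E]]]]].
- by apply: Or32; exists y.
- by have /esym/lrshift_neq := congr1 (@^~ (fst_idx i)) E.
- by rewrite (_ : y = y') //; apply/funext => j; apply: rshift_inj; exact: (congr1 (@^~ j) E).
- by have /esym/lrshift_neq := congr1 (@^~ (fst_idx i)) E.
- by subst i; have /esym/lrshift_neq := congr1 (@^~ (snd_idx _)) E.
Qed.

Lemma qrel_amalgamLR k l r : qrel amalgam k (L l) (R r) <-> k = cross_code (l, r).
Proof.
split=> [/asboolP[[y [E _]]|[y [E _]]|[[l' r'] [/q_inj -> [E|E]]]]|->].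
- by have := congr1 (@^~ (snd_idx k)) E; rewrite tuple2_snd => /esym/lrshift_neq.
- by have := congr1 (@^~ (fst_idx (q k))) E; rewrite tuple2_fst => /lrshift_neq.
- by have [/lshift_inj -> /rshift_inj ->] := tuple2_inj E.
- by have [/lrshift_neq] := tuple2_inj E.
by apply/asboolP/Or33; exists (l, r); split=> //; left.
Qed.

Lemma qrel_amalgamRL k l r : qrel amalgam k (R r) (L l) <-> k = cross_code (l, r).
Proof.
split=> [/asboolP[[y [E _]]|[y [E _]]|[[l' r'] [/q_inj -> [E|E]]]]|->].
- by have := congr1 (@^~ (fst_idx (q k))) E; rewrite tuple2_fst => /esym/lrshift_neq.
- by have := congr1 (@^~ (snd_idx k)) E; rewrite tuple2_snd => /lrshift_neq.
- by have [/esym/lrshift_neq] := tuple2_inj E.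
- by have [/rshift_inj -> /lshift_inj ->] := tuple2_inj E.
by apply/asboolP/Or33; exists (l, r); split=> //; right.
Qed.

Lemma qrel_amalgamL k l v : qrel amalgam k (L l) v ->
  (exists2 l', v = L l' & qrel F k l l') \/ (exists2 r, v = R r & k = cross_code (l, r)).
Proof.
case: (ord_addP v) => [[l' ->]|[r ->]]; last by move/qrel_amalgamLR; right; exists r.
by rewrite -(qrel_embedding amalgam_embeddingL); left; exists l'.
Qed.

Lemma qrel_amalgamR k r v : qrel amalgam k (R r) v ->
  (exists2 r', v = R r' & qrel G k r r') \/ (exists2 l, v = L l & k = cross_code (l, r)).
Proof.
case: (ord_addP v) => [[l ->]|[r' ->]]; first by move/qrel_amalgamRL; right; exists l.
by rewrite -(qrel_embedding amalgam_embeddingR); left; exists r'.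
Qed.

Lemma amalgam_coded : coded amalgam.
Proof.
have [[F_code F_fresh] [G_code G_fresh]] := (F_coded, G_coded).
have code_big lr k : k = cross_code lr -> (k < M)%N -> False.
  by move=> -> ; rewrite ltnNge leq_addr.
split=> [u v|u v w k].
  case: (ord_addP u) (ord_addP v) => [[l ->]|[r ->]] [[l' ->]|[r' ->]] uv.
  - have [|k [kll' k_uniq]] := F_code l l'; first by move=> E; apply: uv; rewrite E.
    exists k; split=> [|k']; rewrite -(qrel_embedding amalgam_embeddingL) //.
    exact: k_uniq.
  - by exists (cross_code (l, r')); split=> [|k' /qrel_amalgamLR ->]; [apply/qrel_amalgamLR|].
  - by exists (cross_code (l', r)); split=> [|k' /qrel_amalgamRL ->]; [apply/qrel_amalgamRL|].
  - have [|k [krr' k_uniq]] := G_code r r'; first by move=> E; apply: uv; rewrite E.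
    exists k; split=> [|k']; rewrite -(qrel_embedding amalgam_embeddingR) //.
    exact: k_uniq.
move=> uv uw kuv kuw; move: kuv kuw uv uw.
case: (ord_addP u) => [[l ->]|[r ->]].
  move=> /qrel_amalgamL[[l1 -> kl1]|[r1 -> k1]] /qrel_amalgamL[[l2 -> kl2]|[r2 -> k2]] ne1 ne2.
  - by congr L; apply: (F_fresh l l1 l2 k) kl1 kl2 => E; [apply: ne1|apply: ne2]; rewrite E.
  - by case: (code_big _ _ k2); apply: F_bound kl1 => E; apply: ne1; rewrite E.
  - by case: (code_big _ _ k1); apply: F_bound kl2 => E; apply: ne2; rewrite E.
  - by move: k2; rewrite k1 => /cross_code_inj [->].
move=> /qrel_amalgamR[[r1 -> kr1]|[l1 -> k1]] /qrel_amalgamR[[r2 -> kr2]|[l2 -> k2]] ne1 ne2.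
- by congr R; apply: (G_fresh r r1 r2 k) kr1 kr2 => E; [apply: ne1|apply: ne2]; rewrite E.
- by case: (code_big _ _ k2); apply: G_bound kr1 => E; apply: ne1; rewrite E.
- by case: (code_big _ _ k1); apply: G_bound kr2 => E; apply: ne2; rewrite E.
- by move: k2; rewrite k1 => /cross_code_inj [->].
Qed.

End Amalgam.

Lemma coded_age_ideal : is_ideal coded_age.
Proof.
split.
- by exists (otype (empty_struct mu)); apply/coded_otype; split; case.
- by move=> a b /OleE[f f_emb]; apply: coded_embedding f_emb.
move=> a b a_coded b_coded.
have [Ma a_bound] := coded_code_bound a_coded.
have [Mb b_bound] := coded_code_bound b_coded.
exists (otype (amalgam (orep a) (orep b) (Ma + Mb))); split.
- apply/coded_otype/amalgam_coded => // k u v uv kuv.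
    by rewrite ltn_addr // (a_bound _ _ _ uv kuv).
  by rewrite ltn_addl // (b_bound _ _ _ uv kuv).
- by apply/Ole_otypeR; eexists; apply: amalgam_embeddingL.
- by apply/Ole_otypeR; eexists; apply: amalgam_embeddingR.
Qed.

Lemma coded_of_age A : (forall F, embeds F A -> coded F) -> coded A.
Proof.
move=> A_coded; split=> [u v uv|u v w k uv uw].
  have [C [e [phi [e_emb ephi]]]] :=
    finite_image_substructure (fun j : 'I_2 => nth u [:: u; v] j).
  have e_phi j : e (phi j) = nth u [:: u; v] j by rewrite -[e _]/((e \o phi) j) ephi.
  have [C_code _] := A_coded C (ex_intro _ e e_emb).
  have [eu ev] : e (phi ord0) = u /\ e (phi ord_max) = v by rewrite !e_phi.
  have [|k [kC k_uniq]] := C_code (phi ord0) (phi ord_max).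
    by move=> E; apply: uv; rewrite -eu -ev E.
  exists k; rewrite -eu -ev.
  by split=> [|k']; rewrite -(qrel_embedding e_emb) //; apply: k_uniq.
have [C [e [phi [e_emb ephi]]]] :=
  finite_image_substructure (fun j : 'I_3 => nth u [:: u; v; w] j).
have e_phi j : e (phi j) = nth u [:: u; v; w] j by rewrite -[e _]/((e \o phi) j) ephi.
have [_ C_fresh] := A_coded C (ex_intro _ e e_emb).
pose j0 : 'I_3 := ord0; pose j1 : 'I_3 := inord 1; pose j2 : 'I_3 := ord_max.
have [eu ev ew] : [/\ e (phi j0) = u, e (phi j1) = v & e (phi j2) = w].
  by rewrite !e_phi /j1 inordK.
rewrite -eu -ev -ew -!(qrel_embedding e_emb) => kuv kuw; congr e.
by apply: C_fresh kuv kuw => E; [apply: uv | apply: uw]; rewrite -eu -?ev -?ew E.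
Qed.

Lemma coded_age_not_representable : ~ representable coded_age.
Proof.
move=> [A ageA].
have [A_code A_fresh] : coded A.
  by apply: coded_of_age => F /age_otype; rewrite ageA => /coded_otype.
pose one_point (S : nat -> bool) : finstruct mu :=
  existT _ 1%N (fun i _ => `[< exists2 k, i = q k & S k >]).
have /choice[c c_rel] S : exists x : carrier A,
    forall k, Defs.rel (fun _ : 'I_(mu (q k)) => x) = S k.
  have : age A (otype (one_point S)).
    by rewrite ageA; apply/coded_otype; split=> [u v|u v w k]; rewrite (ord1 u) (ord1 v).
  move=> /age_otype[f [_ f_rel]]; exists (f ord0) => k.
  rewrite -[fun=> _]/(f \o fun=> ord0) -f_rel.
  by apply/asboolP/idP => [[k' /q_inj ->]|Sk] //; exists k.
have c_inj : injective c.
  by move=> S S' E; apply/funext => k; rewrite -(c_rel S) -(c_rel S') E.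
pose z := c (fun=> false); pose S1 S n := if n is m.+1 then S m else true.
have z_neq S : z <> c (S1 S) by move=> /c_inj /(congr1 (fun S => S 0%N)).
have /choice[K K_spec] S : exists k, qrel A k z (c (S1 S)).
  by have [k [? _]] := A_code _ _ (z_neq S); exists k.
apply: (@nat_bool_not_inj K) => S S' KS.
have : c (S1 S) = c (S1 S').
  by apply: A_fresh (z_neq S) (z_neq S') (K_spec S) _; rewrite KS; apply: K_spec.
by move=> /c_inj /(congr1 (fun S => S \o succn)).
Qed.

End InfiniteNonunary.

Theorem theorem1 (I : Type) (mu : I -> nat) (mu_pos : forall i, (0 < mu i)%N) :
  [/\ ((forall X : set (Omega mu), is_ideal X -> representable X) <->
        finite_set [set i | (2 <= mu i)%N]),
      (finite_set [set i | (2 <= mu i)%N] <-> compact (ideal_space mu)) &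
      ((forall X : set (Omega mu), is_ideal X -> representable X) <->
        compact (ideal_space mu))].
Proof.
have fin_rep : finite_set [set i | (2 <= mu i)%N] ->
    forall X : set (Omega mu), is_ideal X -> representable X.
  by move=> fin X; apply: ideal_representable.
have fin_cpt : finite_set [set i | (2 <= mu i)%N] -> compact (ideal_space mu).
  exact: ideal_space_compact.
have rep_fin : (forall X : set (Omega mu), is_ideal X -> representable X) ->
    finite_set [set i | (2 <= mu i)%N].
  move=> rep; apply: contrapT => /infinite_set_injection[q q_inj q_nonunary].
  exact: coded_age_not_representable q_inj (rep _ (coded_age_ideal mu_pos q_inj q_nonunary)).
have cpt_fin : compact (ideal_space mu) -> finite_set [set i | (2 <= mu i)%N].
  move=> cpt; apply: contrapT => /infinite_set_injection[q q_inj q_nonunary].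
  exact: (ideal_space_not_compact mu_pos q_inj q_nonunary cpt).
split.
- by split=> [/rep_fin|/fin_rep].
- by split=> [/fin_cpt|/cpt_fin].
- by split=> [/rep_fin/fin_cpt|/cpt_fin/fin_rep].
Qed.
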